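(* Let $0\le i\le m\le n$ and let $\Delta_\succ$ be the reverse lexicographic triangulation of the point configuration $\mathcal P(m,n)=\{e_a\oplus f_b:1\le a\le m,\,1\le b\le n\}\subset\mathbb R^m\oplus\mathbb R^n$ with respect to a total order of the points (identified with variables $x_{ab}\leftrightarrow e_a\oplus f_b$) in which $x_{11}\prec x_{22}\prec\cdots\prec x_{ii}$ and all remaining variables are larger than $x_{ii}$ and ordered arbitrarily among themselves. Then $x_{11},\dots,x_{ii}$ are cone points of $\Delta_\succ$. Moreover, if $i=m>1$, the simplicial complex obtained from $\Delta_\succ$ by removing $x_{11},\dots,x_{mm}$ is $\operatorname{core}(\Delta_\succ)$.
   Context: $e_a$, $f_b$ are standard unit vectors of $\mathbb R^m$, $\mathbb R^n$. Reverse lexicographic triangulation of a point configuration $\mathcal A=\{a_1\succ a_2\succ\cdots\succ a_N\}$: if $F_1,\dots,F_k$ are the facets of $\operatorname{conv}(\mathcal A)$ not containing $a_N$, then $\Delta_\succ(\mathcal A)$ has as maximal simplices the sets $G\cup\{a_N\}$ with $G$ a maximal simplex of $\Delta_\succ(\mathcal A\cap F_i)$ for some $i$ (recursively, with the induced order). A cone point of a simplicial complex is a vertex lying in every facet; $\operatorname{core}(\Delta)$ is the restriction of $\Delta$ to the vertices that are not cone points. *)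

From HB Require Import structures.
From mathcomp Require Import all_boot all_order all_algebra.
From mathcomp Require Import reals.
Set Implicit Arguments. Unset Strict Implicit. Unset Printing Implicit Defensive.
Import Order.TTheory GRing.Theory Num.Theory.
Local Open Scope ring_scope.

Section PointConfig.
Variables (R : realType) (d : nat) (I : finType) (pt : I -> 'rV[R]_d).

(* F is a face of conv(pt @ A), recorded as the set of points of A lying
   on it: there is a linear functional w and a constant c with
   w . a >= c on A, and equality exactly on F. (The empty face is allowed.) *)
Definition is_face (A F : {set I}) : Prop :=
  F \subset A /\
  exists (w : 'cV[R]_d) (c : R),
    (forall a, a \in A -> c <= (pt a *m w) 0 0) /\
    (forall a, a \in A -> ((pt a *m w) 0 0 = c <-> a \in F)).

(* homogenized point matrix: rows (1, pt a), a in A; its rank is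
   (affine dimension of conv(pt @ A)) + 1 *)
Definition homog (A : {set I}) : 'M[R]_(#|A|, 1 + d) :=
  \matrix_(k < #|A|) row_mx (1 : 'M[R]_1) (pt (@enum_val I (mem A) k)).

Definition affrank (A : {set I}) : nat := \rank (homog A).

Definition is_facet (A F : {set I}) : Prop :=
  is_face A F /\ (affrank F).+1 = affrank A.

(* revlex A G : G is a maximal simplex of the reverse lexicographic
   triangulation of the configuration A, for the order x < y iff
   ord x < ord y (ord injective).  The last point a_N is the ord-smallest
   point of A. *)
Inductive revlex (ord : I -> nat) : {set I} -> {set I} -> Prop :=
| revlex_nil : revlex ord set0 set0
| revlex_cons (A F G : {set I}) (x : I) :
    x \in A -> (forall y, y \in A -> (ord x <= ord y)%N) ->
    is_facet A F -> x \notin F -> revlex ord F G ->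
    revlex ord A (x |: G).

End PointConfig.

(* Simplicial complexes on a finite vertex type, given by their facets
   (maximal simplices). *)
Section Complexes.
Variable I : finType.
Definition complex := {set I} -> Prop.

Definition faces (D : complex) (t : {set I}) : Prop :=
  exists2 s, D s & t \subset s.

Definition vertex (D : complex) (v : I) : Prop := exists2 s, D s & v \in s.

Definition cone_point (D : complex) (v : I) : Prop :=
  vertex D v /\ forall s, D s -> v \in s.

Definition core (D : complex) (t : {set I}) : Prop :=
  faces D t /\ forall v, v \in t -> vertex D v /\ ~ cone_point D v.

Definition delete (D : complex) (X : {set I}) (t : {set I}) : Prop :=
  faces D t /\ [disjoint t & X].
End Complexes.

(* The configuration P(m,n) = { e_a (+) f_b } in R^m (+) R^n, indexed by
   'I_m * 'I_n (0-based: (a,b) stands for x_{a+1,b+1}). *)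
Definition Pmn (R : realType) (m n : nat) (p : ('I_m * 'I_n)%type) : 'rV[R]_(m + n) :=
  row_mx (delta_mx 0 p.1) (delta_mx 0 p.2).

Definition revlex_Pmn (R : realType) (m n : nat) (ord : ('I_m * 'I_n)%type -> nat)
  : complex ('I_m * 'I_n)%type :=
  revlex (@Pmn R m n) ord [set: 'I_m * 'I_n].

Definition isdiag (m n i : nat) (p : ('I_m * 'I_n)%type) : bool :=
  ((p.1 : nat) == (p.2 : nat)) && (p.1 < i)%N.

(* On P(m,n) the points of a subgrid Rs x Cs satisfy the relations
   x_ab + x_a'b' = x_ab' + x_a'b, so the subgrid spans an affine space of
   dimension |Rs| + |Cs| - 2, and, a linear functional being minimal on a face,
   every face of the subgrid is again a subgrid.  Comparing dimensions, the facets
   not containing a point x_ab of the subgrid are obtained by deleting row a or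
   column b.  So every step of the reverse lexicographic triangulation deletes the
   row or the column of the current least point.
   When x_11 < ... < x_ii are the least points, the k-th step removes x_kk from a
   subgrid that still contains x_(k+1)(k+1), ..., x_ii (they lie in other rows and
   columns), so all of them belong to every maximal simplex.  For i = m and an
   off-diagonal x_ab, deleting the row of x_aa and the columns of the other x_kk
   gives a maximal simplex avoiding x_ab.  The cone points are thus exactly the
   diagonal ones, and the core is the deletion of the diagonal. *)

From HB Require Import structures.
From mathcomp Require Import all_boot all_order all_algebra.
From mathcomp Require Import reals.
From mathcomp Require Import zify lra.
Set Implicit Arguments. Unset Strict Implicit. Unset Printing Implicit Defensive.
Import Order.TTheory GRing.Theory Num.Theory.
Local Open Scope ring_scope.

Lemma setX0 (T U : finType) (B : {set U}) : setX (set0 : {set T}) B = set0.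
Proof. by apply/setP => -[a b]; rewrite in_setX !in_set0. Qed.

Lemma setX1 (T U : finType) (a : T) (b : U) : setX [set a] [set b] = [set (a, b)].
Proof. by apply/setP => -[a' b']; rewrite in_setX !in_set1 xpair_eqE. Qed.

Lemma subsets_eq_card2 (T U : finType) (A A' : {set T}) (B B' : {set U}) :
  A' \subset A -> B' \subset B -> (#|A| + #|B| <= #|A'| + #|B'|)%N -> A' = A /\ B' = B.
Proof.
move=> sA sB le_card; have := subset_leq_card sA; have := subset_leq_card sB.
by split; apply/eqP; rewrite eqEcard ?sA ?sB /=; lia.
Qed.

Lemma setXTT (T U : finType) : setX [set: T] [set: U] = [set: T * U].
Proof. by apply/setP => -[a b]; rewrite in_setX !inE. Qed.

Lemma core_delete (I : finType) (D : complex I) (X : {set I}) :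
  (forall v, cone_point D v <-> v \in X) -> forall t, core D t <-> delete D X t.
Proof.
move=> coneX t; split=> [[Dt not_cone] | [Dt tX]]; split=> //.
  rewrite disjoint_subset; apply/subsetP => v vt; rewrite inE.
  by apply/negP => /coneX; apply: (not_cone v vt).2.
move=> v vt; split; first by case: Dt => s Ds /subsetP ts; exists s; rewrite ?ts.
by move/coneX; rewrite (disjointFr tX vt).
Qed.

Section Homogenization.
Variables (R : realType) (d : nat) (I : finType) (pt : I -> 'rV[R]_d).

Definition hpt (p : I) : 'rV[R]_(1 + d) := row_mx 1 (pt p).

Lemma hpt_lshift p : hpt p 0 (lshift d 0) = 1.
Proof. by rewrite row_mxEl mxE. Qed.

Lemma hpt_rshift p j : hpt p 0 (rshift 1 j) = pt p 0 j.
Proof. by rewrite row_mxEr. Qed.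

Lemma row_homog (A : {set I}) k : row k (homog pt A) = hpt (enum_val k).
Proof. by rewrite rowK. Qed.

Lemma homog_sub (A : {set I}) k (M : 'M[R]_(k, 1 + d)) :
  (forall a, a \in A -> (hpt a <= M)%MS) -> (homog pt A <= M)%MS.
Proof. by move=> sAM; apply/row_subP => j; rewrite row_homog sAM ?enum_valP. Qed.

Lemma hpt_sub_homog (A : {set I}) a : a \in A -> (hpt a <= homog pt A)%MS.
Proof.
move=> aA; have := row_sub (enum_rank_in aA a) (homog pt A).
by rewrite row_homog enum_rankK_in.
Qed.

Lemma affrank_span (A B : {set I}) :
  A \subset B -> (forall b, b \in B -> (hpt b <= homog pt A)%MS) ->
  affrank pt B = affrank pt A.
Proof.
move=> sAB spanB; apply/eqP; rewrite eqn_leq !mxrankS ?homog_sub //.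
by move=> a aA; rewrite hpt_sub_homog ?(subsetP sAB).
Qed.

Lemma affrank_set0 : affrank pt set0 = 0%N.
Proof. by apply/eqP; rewrite -leqn0 -(cards0 I) rank_leq_row. Qed.

Lemma affrank_setU1 (A : {set I}) p j :
  (forall a, a \in A -> hpt a 0 j = 0) -> hpt p 0 j != 0 ->
  affrank pt (p |: A) = (affrank pt A).+1.
Proof.
move=> Aj0 pj0.
have entry_col (M : 'rV[R]_(1 + d)) : M 0 j = (M *m delta_mx j (0 : 'I_1)) 0 0.
  by rewrite -colE mxE.
have homogA_j : homog pt A *m delta_mx j (0 : 'I_1) = 0.
  apply/row_matrixP => k; rewrite row_mul row0 row_homog.
  by apply/matrixP => ? ?; rewrite !ord1 -entry_col Aj0 ?enum_valP ?mxE.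
have notin_A : ~~ (hpt p <= homog pt A)%MS.
  by apply: contra pj0 => /submxP [D ->]; rewrite entry_col -mulmxA homogA_j mulmx0 mxE.
have -> : affrank pt (p |: A) = \rank (homog pt A + hpt p)%MS.
  apply/eqmx_rank; apply/andP; split.
    apply: homog_sub => a; rewrite in_setU1 => /predU1P [->|aA].
      exact: addsmxSr.
    exact: submx_trans (hpt_sub_homog aA) (addsmxSl _ _).
  rewrite addsmx_sub hpt_sub_homog ?setU11 ?homog_sub // => a aA.
  by rewrite hpt_sub_homog // setU1r.
apply/eqP; rewrite eqn_leq; apply/andP; split.
  apply: leq_trans (leq_of_leqif (mxrank_adds_leqif _ _)) _.
  by rewrite -[(affrank _ _).+1]addn1 leq_add2l rank_leq_row.
by rewrite (ltn_leqif (mxrank_leqif_sup (addsmxSl _ _))) addsmx_sub submx_refl.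
Qed.

Lemma affrank_set1 p : affrank pt [set p] = 1%N.
Proof.
rewrite -(setU0 [set p]) (@affrank_setU1 _ _ (lshift d 0)) ?affrank_set0 //.
  by move=> a; rewrite in_set0.
by rewrite hpt_lshift oner_neq0.
Qed.

Lemma is_face_coord (A : {set I}) j :
  (forall a, a \in A -> 0 <= pt a 0 j) -> is_face pt A [set a in A | pt a 0 j == 0].
Proof.
move=> Aj_ge0; split; first by apply/subsetP => a; rewrite inE => /andP [].
exists (delta_mx j 0), 0; split=> a aA; rewrite -colE mxE ?Aj_ge0 //.
by rewrite inE aA; split=> /eqP.
Qed.

Lemma is_facet_set1 p : is_facet pt [set p] set0.
Proof.
split; last by rewrite affrank_set0 affrank_set1.
split; first exact: sub0set.
exists 0, (-1); split=> a _; rewrite mulmx0 mxE ?lerN10 // in_set0.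
by split=> // /eqP; rewrite eq_sym oppr_eq0 oner_eq0.
Qed.

Lemma revlex_subset ord A G : revlex pt ord A G -> G \subset A.
Proof.
elim=> [|{}A F {}G x xA _ [[sFA _] _] _ _ sGF]; first exact: sub0set.
by rewrite subUset sub1set xA (subset_trans sGF sFA).
Qed.

End Homogenization.

Section Grid.
Variables (R : realType) (m n : nat).
Local Notation pt := (@Pmn R m n).

Lemma Pmn_lshift (p : 'I_m * 'I_n) r : pt p 0 (lshift n r) = (p.1 == r)%:R.
Proof. by rewrite row_mxEl mxE eq_sym. Qed.

Lemma Pmn_rshift (p : 'I_m * 'I_n) c : pt p 0 (rshift m c) = (p.2 == c)%:R.
Proof. by rewrite row_mxEr mxE eq_sym. Qed.

Lemma Pmn_square a a0 b b0 : pt (a, b) + pt (a0, b0) = pt (a, b0) + pt (a0, b).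
Proof. by rewrite !add_row_mx [delta_mx 0 b0 + _]addrC. Qed.

Lemma hpt_square a a0 b b0 :
  hpt pt (a, b) = hpt pt (a, b0) + hpt pt (a0, b) - hpt pt (a0, b0).
Proof.
by apply/eqP; rewrite eq_sym subr_eq /hpt !add_row_mx /= [delta_mx 0 b0 + _]addrC.
Qed.

Lemma hpt_sub_square (S : {set 'I_m * 'I_n}) a a0 b b0 :
  (a, b0) \in S -> (a0, b) \in S -> (a0, b0) \in S -> (hpt pt (a, b) <= homog pt S)%MS.
Proof.
move=> ab0S a0bS a0b0S; rewrite (hpt_square a a0 b b0).
by rewrite addmx_sub ?addmx_sub ?eqmx_opp ?hpt_sub_homog.
Qed.

Lemma affrank_setXD1l (Rs : {set 'I_m}) (Cs : {set 'I_n}) r r0 c0 :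
  r \in Rs -> r0 \in Rs :\ r -> c0 \in Cs ->
  affrank pt (setX Rs Cs) = (affrank pt (setX (Rs :\ r) Cs)).+1.
Proof.
move=> rR r0R' c0C; have [_ r0R] := setD1P r0R'.
have sub_Rs : (r, c0) |: setX (Rs :\ r) Cs \subset setX Rs Cs.
  by rewrite subUset sub1set in_setX rR c0C setXS ?subsetDl.
rewrite (affrank_span sub_Rs) => [|[a b]].
  rewrite (affrank_setU1 (j := rshift 1 (lshift n r))) //.
    move=> [a b]; rewrite in_setX in_setD1 -andbA => /and3P [ar _ _].
    by rewrite hpt_rshift Pmn_lshift (negbTE ar).
  by rewrite hpt_rshift Pmn_lshift eqxx oner_neq0.
rewrite in_setX => /andP [aR bC]; have [->|ar] := eqVneq a r.
  apply: (hpt_sub_square (a0 := r0) (b0 := c0)); rewrite ?setU11 //.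
    by rewrite setU1r // in_setX r0R' bC.
  by rewrite setU1r // in_setX r0R' c0C.
by rewrite hpt_sub_homog // setU1r // in_setX in_setD1 ar aR bC.
Qed.

Lemma affrank_setXD1r (Rs : {set 'I_m}) (Cs : {set 'I_n}) c c0 r0 :
  c \in Cs -> c0 \in Cs :\ c -> r0 \in Rs ->
  affrank pt (setX Rs Cs) = (affrank pt (setX Rs (Cs :\ c))).+1.
Proof.
move=> cC c0C' r0R; have [_ c0C] := setD1P c0C'.
have sub_Cs : (r0, c) |: setX Rs (Cs :\ c) \subset setX Rs Cs.
  by rewrite subUset sub1set in_setX cC r0R setXS ?subsetDl.
rewrite (affrank_span sub_Cs) => [|[a b]].
  rewrite (affrank_setU1 (j := rshift 1 (rshift m c))) //.
    move=> [a b]; rewrite in_setX in_setD1 => /and3P [_ bc _].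
    by rewrite hpt_rshift Pmn_rshift (negbTE bc).
  by rewrite hpt_rshift Pmn_rshift eqxx oner_neq0.
rewrite in_setX => /andP [aR bC]; have [->|bc] := eqVneq b c.
  apply: (hpt_sub_square (a0 := r0) (b0 := c0)); rewrite ?setU11 //.
    by rewrite setU1r // in_setX aR c0C'.
  by rewrite setU1r // in_setX r0R c0C'.
by rewrite hpt_sub_homog // setU1r // in_setX in_setD1 bc aR bC.
Qed.

Lemma affrank_setX (Rs : {set 'I_m}) (Cs : {set 'I_n}) r0 c0 :
  r0 \in Rs -> c0 \in Cs -> (affrank pt (setX Rs Cs)).+1 = (#|Rs| + #|Cs|)%N.
Proof.
have [N] := ubnP (#|Rs| + #|Cs|)%N; elim: N Rs Cs => // N IH Rs Cs ltN r0R c0C.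
have [Rs1|[r rR']] := set_0Vmem (Rs :\ r0).
  have [Cs1|[c cC']] := set_0Vmem (Cs :\ c0).
    have -> : Rs = [set r0] by rewrite -(setD1K r0R) Rs1 setU0.
    have -> : Cs = [set c0] by rewrite -(setD1K c0C) Cs1 setU0.
    by rewrite setX1 affrank_set1 !cards1.
  have [cc0 cC] := setD1P cC'.
  have c0C' : c0 \in Cs :\ c by rewrite in_setD1 eq_sym cc0.
  rewrite (@affrank_setXD1r _ _ c c0 r0) // (IH _ _ _ r0R c0C').
    by rewrite (cardsD1 c Cs) (cardsD1 r0 Rs) cC r0R; lia.
  by move: ltN; rewrite (cardsD1 c Cs) cC; lia.
have [rr0 rR] := setD1P rR'.
have r0R' : r0 \in Rs :\ r by rewrite in_setD1 eq_sym rr0.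
rewrite (@affrank_setXD1l _ _ r r0 c0) // (IH _ _ _ r0R' c0C).
  by rewrite (cardsD1 r Rs) (cardsD1 c0 Cs) rR c0C; lia.
by move: ltN; rewrite (cardsD1 r Rs) rR; lia.
Qed.

Lemma is_face_setXD1l (Rs : {set 'I_m}) (Cs : {set 'I_n}) r :
  is_face pt (setX Rs Cs) (setX (Rs :\ r) Cs).
Proof.
suff -> : setX (Rs :\ r) Cs = [set q in setX Rs Cs | pt q 0 (lshift n r) == 0].
  by apply: is_face_coord => q _; rewrite Pmn_lshift ler0n.
apply/setP => -[a b]; rewrite !inE Pmn_lshift pnatr_eq0 eqb0 /=.
by rewrite [RHS]andbC andbA.
Qed.

Lemma is_face_setXD1r (Rs : {set 'I_m}) (Cs : {set 'I_n}) c :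
  is_face pt (setX Rs Cs) (setX Rs (Cs :\ c)).
Proof.
suff -> : setX Rs (Cs :\ c) = [set q in setX Rs Cs | pt q 0 (rshift m c) == 0].
  by apply: is_face_coord => q _; rewrite Pmn_rshift ler0n.
apply/setP => -[a b]; rewrite !inE Pmn_rshift pnatr_eq0 eqb0 /=.
by rewrite -andbA [(b \in Cs) && _]andbC.
Qed.

Lemma is_facet_setXD1l (Rs : {set 'I_m}) (Cs : {set 'I_n}) r r0 c0 :
  r \in Rs -> r0 \in Rs :\ r -> c0 \in Cs ->
  is_facet pt (setX Rs Cs) (setX (Rs :\ r) Cs).
Proof.
by move=> rR r0R' c0C; split; [apply: is_face_setXD1l | rewrite (affrank_setXD1l rR r0R' c0C)].
Qed.

Lemma is_facet_setXD1r (Rs : {set 'I_m}) (Cs : {set 'I_n}) c c0 r0 :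
  c \in Cs -> c0 \in Cs :\ c -> r0 \in Rs ->
  is_facet pt (setX Rs Cs) (setX Rs (Cs :\ c)).
Proof.
by move=> cC c0C' r0R; split; [apply: is_face_setXD1r | rewrite (affrank_setXD1r cC c0C' r0R)].
Qed.

Lemma face_setX (Rs : {set 'I_m}) (Cs : {set 'I_n}) F a0 b0 :
  is_face pt (setX Rs Cs) F -> (a0, b0) \in F ->
  F = setX [set a | (a, b0) \in F] [set b | (a0, b) \in F].
Proof.
move=> [sFA [w [c [ge_c eq_c]]]] a0b0F.
pose phi q := (pt q *m w) 0 0.
have phi_square a b : phi (a, b) + phi (a0, b0) = phi (a, b0) + phi (a0, b).
  have phiD X Y : ((X + Y) *m w) 0 0 = (X *m w) 0 0 + (Y *m w) 0 0.
    by rewrite mulmxDl mxE.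
  by rewrite /phi -!phiD Pmn_square.
have inA a b : (a, b) \in F -> (a \in Rs) * (b \in Cs).
  by move=> /(subsetP sFA); rewrite in_setX => /andP [].
have [a0R b0C] := inA _ _ a0b0F.
have phi_ge a b : a \in Rs -> b \in Cs -> c <= phi (a, b).
  by move=> aR bC; apply: ge_c; rewrite in_setX aR bC.
have mem_F a b : a \in Rs -> b \in Cs -> ((a, b) \in F) = (phi (a, b) == c).
  move=> aR bC; have abA : (a, b) \in setX Rs Cs by rewrite in_setX aR bC.
  by apply/idP/eqP => /(eq_c _ abA).
have phi0 : phi (a0, b0) = c by apply/eqP; rewrite -mem_F.
apply/setP => -[a b]; rewrite in_setX !inE.
have [/andP [aR bC] | abA] := boolP ((a \in Rs) && (b \in Cs)); last first.
  by apply/idP/andP => [/inA [aR bC] | [/inA [aR _] /inA [_ bC]]]; rewrite aR bC in abA.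
rewrite !mem_F //; have := phi_square a b; have := phi_ge a b0 aR b0C.
have := phi_ge a0 b a0R bC; rewrite phi0 => ge1 ge2 sq.
by apply/eqP/andP => [e | [/eqP e1 /eqP e2]]; [split; apply/eqP |]; lra.
Qed.

Lemma facet_setX_notin (Rs : {set 'I_m}) (Cs : {set 'I_n}) F x :
  x \in setX Rs Cs -> is_facet pt (setX Rs Cs) F -> x \notin F ->
  F = setX (Rs :\ x.1) Cs \/ F = setX Rs (Cs :\ x.2).
Proof.
case: x => k l; rewrite in_setX => /andP [kR lC] [faceF rankF] klF /=.
have sFA : F \subset setX Rs Cs by case: faceF.
move/(congr1 S): rankF; rewrite (affrank_setX kR lC) => rankF.
have card_Rs : #|Rs| = #|Rs :\ k|.+1 by rewrite (cardsD1 k) kR.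
have card_Cs : #|Cs| = #|Cs :\ l|.+1 by rewrite (cardsD1 l) lC.
have [F0|[[a0 b0] a0b0F]] := set_0Vmem F.
  move: rankF; rewrite F0 affrank_set0 => rankF; left.
  have /cards0_eq -> : #|Rs :\ k| = 0%N by lia.
  by rewrite setX0.
have [R0 [C0 [FE a0R0 b0C0]]] :
    exists (R0 : {set 'I_m}) (C0 : {set 'I_n}),
      [/\ F = setX R0 C0, a0 \in R0 & b0 \in C0].
  exists [set a | (a, b0) \in F], [set b | (a0, b) \in F].
  by rewrite -(face_setX faceF a0b0F) !inE.
have [sR0 sC0] : R0 \subset Rs /\ C0 \subset Cs.
  have /subsetP sR0C0 : setX R0 C0 \subset setX Rs Cs by rewrite -FE.
  split; apply/subsetP.
    by move=> a aR0; have := sR0C0 (a, b0); rewrite !in_setX aR0 b0C0 => /(_ isT) /andP [].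
  by move=> b bC0; have := sR0C0 (a0, b); rewrite !in_setX a0R0 bC0 => /(_ isT) /andP [].
rewrite FE (affrank_setX a0R0 b0C0) in rankF.
move: klF; rewrite FE in_setX negb_and => /orP [kR0 | lC0]; [left | right].
  have sR0k : R0 \subset Rs :\ k.
    apply/subsetP => a aR0; rewrite in_setD1 (subsetP sR0 _ aR0) andbT.
    by apply: contraNneq kR0 => <-.
  have le_card : (#|Rs :\ k| + #|Cs| <= #|R0| + #|C0|)%N by lia.
  by have [-> ->] := subsets_eq_card2 sR0k sC0 le_card.
have sC0l : C0 \subset Cs :\ l.
  apply/subsetP => b bC0; rewrite in_setD1 (subsetP sC0 _ bC0) andbT.
  by apply: contraNneq lC0 => <-.
have le_card : (#|Rs| + #|Cs :\ l| <= #|R0| + #|C0|)%N by lia.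
by have [-> ->] := subsets_eq_card2 sR0 sC0l le_card.
Qed.

Lemma exists_facet_setX_notin (Rs : {set 'I_m}) (Cs : {set 'I_n}) x :
  x \in setX Rs Cs ->
  exists (Rs' : {set 'I_m}) (Cs' : {set 'I_n}),
    [/\ is_facet pt (setX Rs Cs) (setX Rs' Cs'), x \notin setX Rs' Cs'
      & (#|Rs'| + #|Cs'| < #|Rs| + #|Cs|)%N].
Proof.
case: x => k l; rewrite in_setX => /andP [kR lC].
have card_Rs : #|Rs| = #|Rs :\ k|.+1 by rewrite (cardsD1 k) kR.
have card_Cs : #|Cs| = #|Cs :\ l|.+1 by rewrite (cardsD1 l) lC.
have [Rs1|[r rR']] := set_0Vmem (Rs :\ k); last first.
  exists (Rs :\ k), Cs; split; first exact: (is_facet_setXD1l kR rR' lC).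
    by rewrite in_setX in_setD1 eqxx.
  by rewrite card_Rs addSn.
have [Cs1|[c cC']] := set_0Vmem (Cs :\ l); last first.
  exists Rs, (Cs :\ l); split; first exact: (is_facet_setXD1r lC cC' kR).
    by rewrite in_setX in_setD1 eqxx andbF.
  by rewrite card_Cs addnS.
exists set0, Cs; split; last by rewrite cards0 card_Rs add0n addSn ltnS leq_addl.
  have -> : Rs = [set k] by rewrite -(setD1K kR) Rs1 setU0.
  have -> : Cs = [set l] by rewrite -(setD1K lC) Cs1 setU0.
  by rewrite setX0 setX1; apply: is_facet_set1.
by rewrite setX0 in_set0.
Qed.

Lemma exists_revlex_setX ord (Rs : {set 'I_m}) (Cs : {set 'I_n}) :
  exists G, revlex pt ord (setX Rs Cs) G.
Proof.
have [N] := ubnP (#|Rs| + #|Cs|)%N; elim: N Rs Cs => // N IH Rs Cs ltN.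
have [->|[x0 x0A]] := set_0Vmem (setX Rs Cs); first by exists set0; constructor.
case: (arg_minnP ord x0A) => x xA xmin.
have [Rs' [Cs' [facetF xF ltF]]] := exists_facet_setX_notin xA.
have [G revG] := IH Rs' Cs' (leq_trans ltF ltN).
by exists (x |: G); apply: revlex_cons revG.
Qed.

End Grid.

Section Diagonal.
Variables (R : realType) (m n i : nat) (ord : 'I_m * 'I_n -> nat).
Hypotheses (le_m_n : (m <= n)%N) (ord_inj : injective ord).
Hypothesis ord_diag_lt : forall p q,
  isdiag i p -> isdiag i q -> (p.1 < q.1)%N -> (ord p < ord q)%N.
Hypothesis ord_diag_offdiag : forall p q,
  isdiag i p -> ~~ isdiag i q -> (ord p < ord q)%N.
Local Notation pt := (@Pmn R m n).

Definition diag_pt (k : 'I_m) : 'I_m * 'I_n := (k, widen_ord le_m_n k).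

Lemma isdiag_diag_pt k : isdiag i (diag_pt k) = (k < i)%N.
Proof. by rewrite /isdiag /= eqxx. Qed.

Lemma diag_ptE p : isdiag i p -> diag_pt p.1 = p.
Proof. by case: p => a b /andP [/eqP /= ab _]; congr pair; apply: val_inj. Qed.

Lemma diag_ord_min (A : {set 'I_m * 'I_n}) p :
  isdiag i p -> (forall q, isdiag i q -> q \in A -> (p.1 <= q.1)%N) ->
  forall y, y \in A -> (ord p <= ord y)%N.
Proof.
move=> dp p_min y yA; have [dy|ndy] := boolP (isdiag i y); last first.
  by rewrite ltnW // ord_diag_offdiag.
have := p_min y dy yA; rewrite leq_eqVlt => /orP [/eqP py | lt_py].
  by rewrite -(diag_ptE dp) -(diag_ptE dy) (val_inj py).
by rewrite ltnW // ord_diag_lt.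
Qed.

Lemma facet_notin_diag_pt (Rs : {set 'I_m}) (Cs : {set 'I_n}) F (k : 'I_m) :
  (k < i)%N -> (forall q, isdiag i q -> (q \in setX Rs Cs) = (k <= q.1)%N) ->
  is_facet pt (setX Rs Cs) F -> diag_pt k \notin F ->
  exists (Rs' : {set 'I_m}) (Cs' : {set 'I_n}),
    F = setX Rs' Cs' /\ forall q, isdiag i q -> (q \in F) = (k < q.1)%N.
Proof.
move=> lt_k_i diagA facetF kF.
have diag_gt q : isdiag i q -> (k < q.1)%N = (q.1 != k :> nat) && (q \in setX Rs Cs).
  by move=> dq; rewrite diagA // ltn_neqAle eq_sym.
have kA : diag_pt k \in setX Rs Cs by rewrite diagA ?isdiag_diag_pt.
have [eF|eF] := facet_setX_notin kA facetF kF.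
  exists (Rs :\ k), Cs; split=> // -[a b] dab.
  by rewrite diag_gt // eF !in_setX in_setD1 andbA.
exists Rs, (Cs :\ widen_ord le_m_n k); split=> // -[a b] dab.
rewrite diag_gt // eF !in_setX in_setD1 andbCA.
by case/andP: dab => /eqP /= ->.
Qed.

Lemma diag_in_revlex A G : revlex pt ord A G ->
  forall (Rs : {set 'I_m}) (Cs : {set 'I_n}) k, A = setX Rs Cs ->
  (forall q, isdiag i q -> (q \in A) = (k <= q.1)%N) ->
  forall q, isdiag i q -> (k <= q.1)%N -> q \in G.
Proof.
elim=> [|{}A F {}G x xA x_min facetF xF _ IH] Rs Cs k eA diagA q dq kq.
  by rewrite diagA.
have km : (k < m)%N := leq_ltn_trans kq (ltn_ord _).
pose pk := diag_pt (Ordinal km).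
have lt_k_i : (k < i)%N by rewrite (leq_ltn_trans kq) //; case/andP: dq.
have dpk : isdiag i pk by rewrite isdiag_diag_pt.
have xpk : x = pk.
  apply/ord_inj/eqP; rewrite eqn_leq x_min ?diagA //=.
  by apply: (diag_ord_min dpk _ xA) => q' dq'; rewrite diagA.
rewrite xpk in facetF xF *; rewrite eA in diagA facetF.
have [Rs' [Cs' [eF diagF]]] := facet_notin_diag_pt (k := Ordinal km) lt_k_i diagA facetF xF.
rewrite in_setU1; have [qk|] := eqVneq (q.1 : nat) k.
  suff -> : q = pk by rewrite eqxx.
  by rewrite -(diag_ptE dq); congr diag_pt; apply: val_inj.
by rewrite eq_sym => nkq; rewrite (IH Rs' Cs' k.+1) ?orbT // ltn_neqAle nkq.
Qed.

Lemma cone_point_diag p : isdiag i p -> cone_point (revlex_Pmn R ord) p.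
Proof.
move=> dp; have p_in G : revlex_Pmn R ord G -> p \in G.
  move=> revG; apply: (diag_in_revlex revG (Rs := setT) (Cs := setT) (k := 0)) => //.
    by rewrite setXTT.
  by move=> q _; rewrite inE.
have [G revG] := exists_revlex_setX R ord [set: 'I_m] [set: 'I_n].
rewrite setXTT in revG.
by split=> [|G' /p_in //]; exists G => //; apply: p_in.
Qed.

Section OffDiagonal.
Hypotheses (i_eq_m : i = m) (m_gt1 : (1 < m)%N).
Variables (a0 : 'I_m) (b0 : 'I_n).
Hypothesis a0_neq_b0 : (a0 : nat) != b0.

(* [grid k] is what remains of the full grid once [diag_pt 0], ..., [diag_pt k.-1]
   have been peeled off, deleting the row of [diag_pt a0] and the column of each
   other one; [(a0, b0)] is never peeled off. *)
Definition rows_from k := [set r : 'I_m | (r != a0) || (k <= a0)%N].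
Definition cols_from k := [set c : 'I_n | (k <= c)%N || (c == a0 :> nat)].
Local Notation grid k := (setX (rows_from k) (cols_from k)).

Lemma diag_pt_in_grid (k : 'I_m) : diag_pt k \in grid k.
Proof.
by rewrite in_setX !inE /= leqnn andbT; case: eqVneq => [->|]; rewrite ?leqnn.
Qed.

Lemma diag_in_grid_ge (k : nat) q : isdiag i q -> q \in grid k -> (k <= q.1)%N.
Proof.
case: q => a b /andP [/eqP /= ab _]; rewrite in_setX !inE /= -ab.
by case/andP=> + /orP [// | /eqP/val_inj a_a0]; rewrite a_a0 eqxx.
Qed.

Lemma revlex_grid_step (k : 'I_m) G :
  revlex pt ord (grid k.+1) G -> revlex pt ord (grid k) (diag_pt k |: G).
Proof.
move=> revG; have dk : isdiag i (diag_pt k) by rewrite isdiag_diag_pt i_eq_m.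
have k_min : forall y, y \in grid k -> (ord (diag_pt k) <= ord y)%N.
  by apply: diag_ord_min dk _ => q dq; apply: diag_in_grid_ge.
have := diag_pt_in_grid k; rewrite in_setX => /andP [k_row k_col].
have [ka|ka] := eqVneq k a0.
  have rows_k : rows_from k :\ k = rows_from k.+1.
    by apply/setP => r; rewrite in_setD1 !inE -ka ltnn leqnn orbF orbT andbT.
  have cols_k : cols_from k = cols_from k.+1.
    by apply/setP => c; rewrite !inE -ka [(c : nat) == _]eq_sym; case: ltngtP.
  have [r0 r0_row] : exists r0 : 'I_m, r0 \in rows_from k :\ k.
    apply/set0Pn; rewrite -card_gt0 rows_k.
    have -> : rows_from k.+1 = [set~ a0].
      by apply/setP => r; rewrite !inE ka ltnn orbF.
    by rewrite (cardsC1 a0) (card_ord m) -subn1 subn_gt0.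
  apply: revlex_cons (diag_pt_in_grid k) k_min _ _ revG.
    by rewrite -rows_k -cols_k; apply: is_facet_setXD1l k_row r0_row k_col.
  by rewrite in_setX !inE /= ka ltnn eqxx.
have cols_k : cols_from k :\ widen_ord le_m_n k = cols_from k.+1.
  apply/setP => c; rewrite in_setD1 !inE -val_eqE /=.
  by rewrite eq_sym; case: ltngtP => // <-; rewrite val_eqE (negbTE ka).
have rows_k : rows_from k = rows_from k.+1.
  by apply/setP => r; rewrite !inE ltn_neqAle val_eqE ka.
have a0_col : widen_ord le_m_n a0 \in cols_from k :\ widen_ord le_m_n k.
  by rewrite cols_k inE eqxx orbT.
apply: revlex_cons (diag_pt_in_grid k) k_min _ _ revG.
  by rewrite -rows_k -cols_k; apply: is_facet_setXD1r k_col a0_col k_row.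
by rewrite in_setX !inE /= ltnn val_eqE (negbTE ka) andbF.
Qed.

Lemma revlex_grid_avoiding j : (j <= m)%N ->
  exists G, revlex pt ord (grid (m - j)) G /\ (a0, b0) \notin G.
Proof.
elim: j => [_ | j IH lt_j_m].
  have [G revG] := exists_revlex_setX R ord (rows_from (m - 0)) (cols_from (m - 0)).
  exists G; split=> //; apply/negP => /(subsetP (revlex_subset revG)).
  by rewrite in_setX !inE eqxx subn0 leqNgt ltn_ord.
have [G [revG a0b0G]] := IH (ltnW lt_j_m).
have km : (m - j.+1 < m)%N by rewrite ltn_subrL (leq_ltn_trans _ lt_j_m).
exists (diag_pt (Ordinal km) |: G); split.
  by apply: (@revlex_grid_step (Ordinal km)); rewrite /= subnSK.
by rewrite in_setU1 negb_or a0b0G andbT; apply: contra a0_neq_b0 => /eqP [-> ->].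
Qed.

Lemma not_cone_point_offdiag : ~ cone_point (revlex_Pmn R ord) (a0, b0).
Proof.
have [G [revG a0b0G]] := revlex_grid_avoiding (leqnn m).
have grid0 : grid (m - m) = [set: 'I_m * 'I_n].
  by rewrite subnn -setXTT; congr setX; apply/setP => r; rewrite !inE ?orbT.
rewrite grid0 in revG.
by case=> _ /(_ G revG); apply/negP.
Qed.

End OffDiagonal.

End Diagonal.

Theorem lemma4p12 (R : realType) (m n i : nat) (ord : 'I_m * 'I_n -> nat) :
  (i <= m)%N -> (m <= n)%N ->
  injective ord ->
  (forall p q, isdiag i p -> isdiag i q -> (p.1 < q.1)%N -> (ord p < ord q)%N) ->
  (forall p q, isdiag i p -> ~~ isdiag i q -> (ord p < ord q)%N) ->
  (forall p, isdiag i p -> cone_point (revlex_Pmn R ord) p) /\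
  (i = m -> (1 < m)%N ->
   forall t, core (revlex_Pmn R ord) t <->
             delete (revlex_Pmn R ord) [set p | isdiag i p] t).
Proof.
move=> _ le_m_n ord_inj ord_diag_lt ord_diag_offdiag.
have cone_diag := cone_point_diag R le_m_n ord_inj ord_diag_lt ord_diag_offdiag.
split=> // i_eq_m m_gt1; apply: core_delete => -[a b]; rewrite inE.
split=> [cone_ab | /cone_diag //]; apply: contraT => offdiag_ab; exfalso.
have a_neq_b : (a : nat) != b by move: offdiag_ab; rewrite /isdiag i_eq_m ltn_ord andbT.
exact: (not_cone_point_offdiag le_m_n ord_diag_lt ord_diag_offdiag i_eq_m m_gt1
          a_neq_b cone_ab).
Qed.
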